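(* Let $(\mathcal{S},\mathcal{R})$ be a complete positive presentation satisfying the following two conditions: (C) $\mathcal{R}$ contains no relation of the form $su=sv$ or $us=vs$ with $s\in\mathcal{S}$, $u,v\in\mathcal{S}^*$ and $u\neq v$; (E$_r$) there exists a set $\mathcal{S}'$ with $\mathcal{S}\subseteq\mathcal{S}'\subseteq\mathcal{S}^*$ such that for all $u,v\in\mathcal{S}'$ there exist $u',v'\in\mathcal{S}'$ satisfying $(uv')^{-1}(vu')\curvearrowright_r\varepsilon$. Then the monoid $\mathrm{Mon}(\mathcal{S};\mathcal{R})$ embeds in a group of fractions.
   Context: A positive presentation is a pair $(\mathcal{S},\mathcal{R})$ where $\mathcal{S}$ is a nonempty set of letters and $\mathcal{R}$ is a family of relations $u=v$, i.e. unordered pairs $\{u,v\}$ of nonempty words in the free monoid $\mathcal{S}^*$ (letters are regarded as length-one words). $\varepsilon$ denotes the empty word; $\equiv$ is the smallest congruence on $\mathcal{S}^*$ containing all pairs of $\mathcal{R}$, and $\mathrm{Mon}(\mathcal{S};\mathcal{R})=\mathcal{S}^*/{\equiv}$. Let $\mathcal{S}^{-1}=\{s^{-1}:s\in\mathcal{S}\}$ be a disjoint copy of $\mathcal{S}$; for $u\in\mathcal{S}^*$, $u^{-1}$ is obtained by reversing the order of the letters of $u$ and replacing each $s$ by $s^{-1}$. Right reversing: $\mathbf{w}\curvearrowright_r\mathbf{w}'$ (words on $\mathcal{S}\cup\mathcal{S}^{-1}$) if $\mathbf{w}'$ is obtained from $\mathbf{w}$ by finitely many steps, each deleting a subword $u^{-1}u$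 ($u\in\mathcal{S}^*$ nonempty) or replacing a subword $u^{-1}v$ ($u,v\in\mathcal{S}^*$ nonempty) by $v'u'^{-1}$ where $uv'=vu'$ is a relation of $\mathcal{R}$. Left reversing: $\mathbf{w}\curvearrowright_l\mathbf{w}'$ if $\mathbf{w}'$ is obtained by finitely many steps, each deleting a subword $uu^{-1}$ ($u$ nonempty) or replacing a subword $uv^{-1}$ ($u,v$ nonempty) by $v'^{-1}u'$ where $v'u=u'v$ is a relation of $\mathcal{R}$. $(\mathcal{S},\mathcal{R})$ is $r$-complete if for all $u,v,u',v'\in\mathcal{S}^*$ with $uv'\equiv vu'$ there exist $u'',v'',w\in\mathcal{S}^*$ with $u^{-1}v\curvearrowright_r v''u''^{-1}$, $u'\equiv u''w$, $v'\equiv v''w$; it is $l$-complete if for all $u,v,u',v'$ with $v'u\equiv u'v$ there exist $u'',v'',w$ with $uv^{-1}\curvearrowright_l v''^{-1}u''$, $u'\equiv wu''$, $v'\equiv wv''$; it is complete if it is both. A monoid $M$ embeds in a group of fractions if there is a group $G$ containing (an isomorphic copy of) $M$ as a submonoid such that every element of $G$ has the form $xy^{-1}$ with $x,y\in M$. *)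

From Stdlib Require Import List.
Import ListNotations.
Set Implicit Arguments.

Section Presentations.
Variable S : Type.

Definition word := list S.

Definition rel (R : word -> word -> Prop) (x y : word) : Prop := R x y \/ R y x.

Definition positive_rels (R : word -> word -> Prop) : Prop :=
  forall x y, R x y -> x <> [] /\ y <> [].

Inductive cong (R : word -> word -> Prop) : word -> word -> Prop :=
| cong_rel : forall a b x y, R x y -> cong R (a ++ x ++ b) (a ++ y ++ b)
| cong_refl : forall x, cong R x x
| cong_sym : forall x y, cong R x y -> cong R y x
| cong_trans : forall x y z, cong R x y -> cong R y z -> cong R x z.

(* Signed words on S ∪ S^{-1}: inl s = s, inr s = s^{-1}. *)
Definition sword := list (S + S).
Definition pos (u : word) : sword := map inl u.
Definition neg (u : word) : sword := rev (map inr u).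

Inductive rrev_step (R : word -> word -> Prop) : sword -> sword -> Prop :=
| rrev_del : forall w1 w2 u, u <> [] ->
    rrev_step R (w1 ++ neg u ++ pos u ++ w2) (w1 ++ w2)
| rrev_rel : forall w1 w2 u v u' v', u <> [] -> v <> [] ->
    rel R (u ++ v') (v ++ u') ->
    rrev_step R (w1 ++ neg u ++ pos v ++ w2) (w1 ++ pos v' ++ neg u' ++ w2).

Inductive lrev_step (R : word -> word -> Prop) : sword -> sword -> Prop :=
| lrev_del : forall w1 w2 u, u <> [] ->
    lrev_step R (w1 ++ pos u ++ neg u ++ w2) (w1 ++ w2)
| lrev_rel : forall w1 w2 u v u' v', u <> [] -> v <> [] ->
    rel R (v' ++ u) (u' ++ v) ->
    lrev_step R (w1 ++ pos u ++ neg v ++ w2) (w1 ++ neg v' ++ pos u' ++ w2).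

Inductive star (step : sword -> sword -> Prop) : sword -> sword -> Prop :=
| star_refl : forall w, star step w w
| star_step : forall w1 w2 w3, step w1 w2 -> star step w2 w3 -> star step w1 w3.

Definition rrev R := star (rrev_step R).
Definition lrev R := star (lrev_step R).

Definition r_complete (R : word -> word -> Prop) : Prop :=
  forall u v u' v' : word, cong R (u ++ v') (v ++ u') ->
    exists u'' v'' w : word,
      rrev R (neg u ++ pos v) (pos v'' ++ neg u'') /\
      cong R u' (u'' ++ w) /\ cong R v' (v'' ++ w).

Definition l_complete (R : word -> word -> Prop) : Prop :=
  forall u v u' v' : word, cong R (v' ++ u) (u' ++ v) ->
    exists u'' v'' w : word,
      lrev R (pos u ++ neg v) (neg v'' ++ pos u'') /\
      cong R u' (w ++ u'') /\ cong R v' (w ++ v'').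

Definition complete R := r_complete R /\ l_complete R.

Definition cond_C (R : word -> word -> Prop) : Prop :=
  forall x y, R x y ->
    (forall (s : S) (u v : word), x = s :: u -> y = s :: v -> u = v) /\
    (forall (s : S) (u v : word), x = u ++ [s] -> y = v ++ [s] -> u = v).

Definition cond_Er (R : word -> word -> Prop) : Prop :=
  exists S' : word -> Prop,
    (forall s : S, S' [s]) /\
    forall u v, S' u -> S' v ->
      exists u' v', S' u' /\ S' v' /\
        rrev R (neg (u ++ v') ++ pos (v ++ u')) [].

End Presentations.

Record group := Group {
  gcar :> Type;
  gmul : gcar -> gcar -> gcar;
  gone : gcar;
  ginv : gcar -> gcar;
  gmulA : forall x y z, gmul x (gmul y z) = gmul (gmul x y) z;
  gmul1l : forall x, gmul gone x = x;
  gmul1r : forall x, gmul x gone = x;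
  gmulVl : forall x, gmul (ginv x) x = gone;
  gmulVr : forall x, gmul x (ginv x) = gone
}.

(* Mon(S;R) = S^*/≡ embeds in a group of fractions: there is a group G and a
   monoid morphism phi : S^* -> G whose kernel congruence is exactly ≡ (so
   S^*/≡ is isomorphic to the submonoid phi(S^* ) of G) and every element of G
   is phi x * (phi y)^{-1}. *)
Definition embeds_in_group_of_fractions (S : Type) (R : word S -> word S -> Prop) : Prop :=
  exists (G : group) (phi : word S -> G),
    phi [] = gone G /\
    (forall u v, phi (u ++ v) = gmul G (phi u) (phi v)) /\
    (forall u v, phi u = phi v <-> cong R u v) /\
    (forall g : G, exists x y, g = gmul G (phi x) (ginv G (phi y))).

(* Ore's theorem: a cancellative monoid in which any two elements have a common right
   multiple embeds in its group of right fractions.  Both hypotheses are read off reversing.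
   Under (C) the word s⁻¹s can only reverse to v v⁻¹, which is irreducible, so
   r-completeness turns s u ≡ s v into u ≡ v; right cancellation is the same argument
   for the mirror presentation, whose right reversing is the left reversing of R.
   Right reversing is sound, so by (E_r) any two elements of S' have a common right
   multiple in S', and a grid argument extends this to all words.  The group is the one
   presented by (S, R); the monoid injects into it because signed words act on fractions
   x y⁻¹ of positive words compatibly with the group relations. *)
From Stdlib Require Import List Lia Setoid.
From Stdlib Require Import FunctionalExtensionality PropExtensionality ProofIrrelevance IndefiniteDescription.
Import ListNotations.
Set Implicit Arguments.

Section Congruence.
Variables (S : Type) (R : word S -> word S -> Prop).
Local Notation "u ≡ v" := (cong R u v) (at level 70).

Lemma cong_app_l a x y : x ≡ y -> a ++ x ≡ a ++ y.
Proof.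
  induction 1 as [b c x y Hxy| | |]; try (econstructor; eassumption).
  rewrite !app_assoc, <- !(app_assoc (a ++ b)). now apply cong_rel.
Qed.

Lemma cong_app_r b x y : x ≡ y -> x ++ b ≡ y ++ b.
Proof.
  induction 1 as [a c x y Hxy| | |]; try (econstructor; eassumption).
  rewrite <- !app_assoc. now apply cong_rel.
Qed.

Lemma cong_of_R x y : R x y -> x ≡ y.
Proof. intro H. now rewrite <- (app_nil_r x), <- (app_nil_r y); apply (cong_rel R []). Qed.

Lemma cong_of_rel x y : rel R x y -> x ≡ y.
Proof. intros [H|H]; [|apply cong_sym]; now apply cong_of_R. Qed.

Lemma cong_nil : positive_rels R -> forall x y, x ≡ y -> x = [] <-> y = [].
Proof.
  intros Hpos x y. induction 1 as [a b x y Hxy| | |]; try tauto.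
  destruct (Hpos x y Hxy), x, y; try congruence.
  split; intro E; apply app_eq_nil in E as [_ E]; discriminate.
Qed.

End Congruence.

Add Parametric Relation (S : Type) (R : word S -> word S -> Prop) : (word S) (cong R)
  reflexivity proved by (@cong_refl S R)
  symmetry proved by (@cong_sym S R)
  transitivity proved by (@cong_trans S R)
  as cong_equivalence.

Add Parametric Morphism (S : Type) (R : word S -> word S -> Prop) : (@app S)
  with signature cong R ==> cong R ==> cong R as app_cong.
Proof.
  intros x x' Hx y y' Hy. transitivity (x' ++ y).
  - now apply cong_app_r.
  - now apply cong_app_l.
Qed.

Add Parametric Morphism (S : Type) (R : word S -> word S -> Prop) (s : S) : (@cons S s)
  with signature cong R ==> cong R as cons_cong.
Proof. intros x y H. exact (cong_app_l [s] H). Qed.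

Section ReversingSoundness.
Variables (S : Type) (R : word S -> word S -> Prop).
Local Notation "u ≡ v" := (cong R u v) (at level 70).
Local Notation frac := (word S * word S)%type.

Definition pair_cong (x y : frac) : Prop := fst x ≡ fst y /\ snd x ≡ snd y.

Lemma pair_cong_refl x : pair_cong x x.
Proof. split; reflexivity. Qed.

(* A pair (p, q) stands for the fraction p q⁻¹, and [acts w x z] says that z represents
   w·x.  A letter s⁻¹ may act through any common right multiple, so no Ore condition is
   needed to define the action. *)
Definition letter_acts (l : S + S) (y z : frac) : Prop :=
  match l with
  | inl s => s :: fst y ≡ fst z /\ snd y ≡ snd z
  | inr s => exists t, s :: fst z ≡ fst y ++ t /\ snd z ≡ snd y ++ t
  end.

Fixpoint acts (w : sword S) (x z : frac) : Prop :=
  match w with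
  | [] => pair_cong x z
  | l :: w' => exists y, acts w' x y /\ letter_acts l y z
  end.

Lemma letter_acts_compat l x x' z z' :
  pair_cong x x' -> pair_cong z z' -> letter_acts l x z -> letter_acts l x' z'.
Proof.
  destruct x, x', z, z', l as [s|s]; intros [Hx1 Hx2] [Hz1 Hz2]; simpl in *.
  - rewrite Hx1, Hx2, Hz1, Hz2. tauto.
  - setoid_rewrite Hx1; setoid_rewrite Hx2; setoid_rewrite Hz1; setoid_rewrite Hz2. tauto.
Qed.

Lemma acts_compat w x x' z z' :
  pair_cong x x' -> pair_cong z z' -> acts w x z -> acts w x' z'.
Proof.
  revert z z'. induction w as [|l w IH]; intros z z' Hx Hz; simpl.
  - destruct Hx as [Hx1 Hx2], Hz as [Hz1 Hz2]. intros [H1 H2].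
    split; [rewrite <- Hx1, <- Hz1 | rewrite <- Hx2, <- Hz2]; assumption.
  - intros [y [Hw Hl]]. exists y. split.
    + exact (IH y y Hx (pair_cong_refl y) Hw).
    + exact (letter_acts_compat l (pair_cong_refl y) Hz Hl).
Qed.

Lemma acts_app a b x z : acts (a ++ b) x z <-> exists y, acts b x y /\ acts a y z.
Proof.
  revert z. induction a as [|l a IH]; intro z; simpl.
  - split.
    + intro H. exists z. split; [assumption | apply pair_cong_refl].
    + intros [y [Hb Hy]]. exact (acts_compat b (pair_cong_refl x) Hy Hb).
  - split.
    + intros [y [Hab Hl]]. apply IH in Hab as [y' [Hb Ha]]. eauto.
    + intros [y' [Hb [y [Ha Hl]]]]. exists y. split; [apply IH|]; eauto.
Qed.

Lemma acts_single l x z : acts [l] x z <-> letter_acts l x z.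
Proof.
  simpl. split.
  - intros [y [Hxy Hl]]. refine (letter_acts_compat l _ (pair_cong_refl z) Hl).
    destruct Hxy. split; symmetry; assumption.
  - intro Hl. exists x. split; [apply pair_cong_refl | assumption].
Qed.

Lemma acts_pos a p q z : acts (pos a) (p, q) z <-> pair_cong (a ++ p, q) z.
Proof.
  revert z. induction a as [|s a IH]; intro z; [reflexivity|].
  simpl. split.
  - intros [y [Ha [Hs Hq]]]. apply IH in Ha as [Hp' Hq']. simpl in *.
    split; simpl; [rewrite Hp' | rewrite Hq']; assumption.
  - intros [Hp Hq]. exists (a ++ p, q). split; [apply IH, pair_cong_refl | split; assumption].
Qed.

Lemma acts_neg a p q p' q' :
  acts (neg a) (p, q) (p', q') -> exists t, a ++ p' ≡ p ++ t /\ q' ≡ q ++ t.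
Proof.
  revert p q p' q'. induction a as [|s a IH]; intros p q p' q'.
  - intros [Hp Hq]. exists []. rewrite !app_nil_r. split; symmetry; assumption.
  - change (neg (s :: a)) with (neg a ++ [inr s]).
    intro H. apply acts_app in H as [[p1 q1] [Hs Ha]].
    apply acts_single in Hs as [t1 [Hp1 Hq1]]. apply IH in Ha as [t2 [Hp2 Hq2]]. simpl in *.
    exists (t1 ++ t2). split.
    + rewrite Hp2, app_comm_cons, Hp1, <- app_assoc. reflexivity.
    + rewrite Hq2, Hq1, <- app_assoc. reflexivity.
Qed.

Lemma acts_neg_cancel a p q : acts (neg a) (a ++ p, q) (p, q).
Proof.
  revert p. induction a as [|s a IH]; intro p; [apply pair_cong_refl|].
  change (neg (s :: a)) with (neg a ++ [inr s]).
  apply acts_app. exists (a ++ p, q). split; [|apply IH].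
  apply acts_single. exists []. rewrite !app_nil_r. split; reflexivity.
Qed.

Lemma acts_neg_intro a p q p' q' t :
  a <> [] -> a ++ p' ≡ p ++ t -> q' ≡ q ++ t -> acts (neg a) (p, q) (p', q').
Proof.
  destruct a as [|s a]; [contradiction|]. intros _ Hp Hq.
  change (neg (s :: a)) with (neg a ++ [inr s]).
  apply acts_app. exists (a ++ p', q'). split; [|apply acts_neg_cancel].
  apply acts_single. exists t. split; assumption.
Qed.

Lemma acts_reversal u v u' v' x z : u <> [] -> u ++ v' ≡ v ++ u' ->
  acts (pos v' ++ neg u') x z -> acts (neg u ++ pos v) x z.
Proof.
  destruct x as [p q], z as [p2 q2]. intros Hu Huv H.
  apply acts_app in H as [[p1 q1] [Hu' Hv']].
  apply acts_neg in Hu' as [t [Hp1 Hq1]]. apply acts_pos in Hv' as [Hp2 Hq2]. simpl in *.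
  apply acts_app. exists (v ++ p, q). split; [apply acts_pos, pair_cong_refl|].
  apply acts_neg_intro with (t := t); [exact Hu | |].
  - rewrite <- Hp2, app_assoc, Huv, <- app_assoc, Hp1, app_assoc. reflexivity.
  - rewrite <- Hq2. assumption.
Qed.

Lemma acts_context w1 w2 a b : (forall x z, acts b x z -> acts a x z) ->
  forall x z, acts (w1 ++ b ++ w2) x z -> acts (w1 ++ a ++ w2) x z.
Proof.
  intros Hab x z H. apply acts_app in H as [y [H1 H2]]. apply acts_app in H1 as [y' [H3 H4]].
  apply acts_app. exists y. split; [|assumption]. apply acts_app. eauto.
Qed.

Lemma rrev_acts w w' : rrev R w w' -> forall x z, acts w' x z -> acts w x z.
Proof.
  induction 1 as [|w1 w2 w3 Hstep _ IH]; [tauto|].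
  intros x z H. apply IH in H. clear IH. revert x z H.
  destruct Hstep as [w1 w2 u Hu | w1 w2 u v u' v' Hu _ Huv]; rewrite (app_assoc (neg u)).
  - change (w1 ++ w2) with (w1 ++ (pos [] ++ neg []) ++ w2).
    apply acts_context. intros x z. apply acts_reversal; [assumption|].
    rewrite !app_nil_r. reflexivity.
  - rewrite (app_assoc (pos v')). apply acts_context. intros x z.
    apply acts_reversal; [assumption|]. apply cong_of_rel. assumption.
Qed.

Lemma rrev_sound : positive_rels R -> forall a b, rrev R (neg a ++ pos b) [] -> a ≡ b.
Proof.
  intros Hpos a b H. apply rrev_acts with (x := ([], [])) (z := ([], [])) in H;
    [|apply pair_cong_refl].
  apply acts_app in H as [y [Hb Ha]]. apply acts_pos in Hb. rewrite app_nil_r in Hb.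
  apply (acts_compat (neg a) (x' := (b, [])) (z' := ([], []))) in Ha;
    [|destruct Hb; split; symmetry; assumption | apply pair_cong_refl].
  apply acts_neg in Ha as [t [Hab Ht]].
  assert (t = []) as -> by (apply (cong_nil Hpos Ht); reflexivity).
  rewrite !app_nil_r in Hab. assumption.
Qed.

End ReversingSoundness.

Section LeftCancellation.
Variables (S : Type) (R : word S -> word S -> Prop).
Local Notation "u ≡ v" := (cong R u v) (at level 70).

Fixpoint rrev_irreducible (w : sword S) : Prop :=
  match w with
  | [] => True
  | l :: w' =>
      match l, w' with inr _, inl _ :: _ => False | _, _ => True end /\ rrev_irreducible w'
  end.

Lemma rrev_step_reducible w w' : rrev_step R w w' -> ~ rrev_irreducible w.
Proof.
  assert (Hredex : forall w1 w2 s t, ~ rrev_irreducible (w1 ++ inr s :: inl t :: w2))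
    by (intros w1 w2 s t; induction w1; simpl; tauto).
  destruct 1 as [w1 w2 u Hu | w1 w2 u v u' v' Hu Hv _];
    destruct u as [|s u]; try contradiction; [|destruct v as [|t v]; try contradiction];
    change (neg (s :: u)) with (neg u ++ [inr s]); rewrite <- !app_assoc, app_assoc;
    apply Hredex.
Qed.

Lemma pos_neg_irreducible (a b : word S) : rrev_irreducible (pos a ++ neg b).
Proof.
  unfold pos, neg. rewrite <- map_rev. generalize (rev b) as b'. intro b'.
  induction a as [|s a IH]; simpl.
  - induction b' as [|t b' IH]; simpl; [trivial|]. split; [destruct b'; simpl|]; trivial.
  - split; [destruct a, b'; simpl|]; trivial.
Qed.

Lemma rrev_irreducible_stuck w w' : rrev R w w' -> rrev_irreducible w -> w' = w.
Proof.
  destruct 1 as [|w1 w2 w3 Hstep _]; [reflexivity|].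
  intro Hw. exfalso. exact (rrev_step_reducible Hstep Hw).
Qed.

Lemma pos_neg_inj (a b c d : word S) : pos a ++ neg b = pos c ++ neg d -> a = c /\ b = d.
Proof.
  unfold pos, neg. rewrite <- !map_rev.
  intro E. enough (a = c /\ rev b = rev d) as [-> Hbd].
  { split; [reflexivity|]. rewrite <- (rev_involutive b), Hbd. apply rev_involutive. }
  revert c E. generalize (rev b) as b', (rev d) as d'.
  induction a as [|s a IH]; intros b' d' [|t c] E; simpl in E.
  - split; [reflexivity|]. revert d' E. induction b' as [|s b' IHb]; intros [|t d'] E;
      simpl in E; try discriminate; [reflexivity|].
    injection E as -> E. f_equal. apply IHb, E.
  - destruct b'; discriminate.
  - destruct d'; discriminate.
  - injection E as -> E. apply IH in E as [-> ->]. split; reflexivity.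
Qed.

Hypothesis first_letter : forall s u v, R (s :: u) (s :: v) -> u = v.

Lemma rrev_step_neg_pos_letter s w :
  rrev_step R [inr s; inl s] w -> exists v, w = pos v ++ neg v.
Proof.
  intro H. inversion H as [w1 w2 u Hu E | w1 w2 u v u' v' Hu Hv Huv E]; subst;
    apply (f_equal (@length _)) in E as L; unfold neg, pos in L;
    rewrite !length_app, length_rev, !length_map in L; simpl in L.
  - exists []. destruct u; [contradiction|]. destruct w1, w2; simpl in L; [reflexivity|lia..].
  - destruct u as [|a [|]], v as [|b [|]], w1, w2; simpl in L; try contradiction; try lia.
    injection E as -> ->. exists u'. rewrite app_nil_r.
    destruct Huv as [Huv|Huv]; apply first_letter in Huv; subst; reflexivity.
Qed.

Lemma rrev_neg_pos_letter s u v : rrev R [inr s; inl s] (pos v ++ neg u) -> v = u.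
Proof.
  remember [inr s; inl s] as w eqn:Ew. remember (pos v ++ neg u) as w' eqn:Ew'.
  destruct 1 as [w | w1 w2 w3 Hstep Hrest]; subst.
  - pose proof (pos_neg_irreducible v u) as Hirr. rewrite <- Ew' in Hirr. simpl in Hirr. tauto.
  - apply rrev_step_neg_pos_letter in Hstep as [v0 ->].
    apply rrev_irreducible_stuck in Hrest; [|apply pos_neg_irreducible].
    apply pos_neg_inj in Hrest as [-> ->]. reflexivity.
Qed.

Hypothesis R_r_complete : r_complete R.

Lemma cong_cancel_letter_l s u v : s :: u ≡ s :: v -> u ≡ v.
Proof.
  intro H. destruct (R_r_complete [s] [s] v u H) as [u'' [v'' [w [Hrev [Hv Hu]]]]].
  apply rrev_neg_pos_letter in Hrev as ->. rewrite Hu, Hv. reflexivity.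
Qed.

Lemma cong_cancel_l x u v : x ++ u ≡ x ++ v -> u ≡ v.
Proof.
  induction x as [|s x IH]; [trivial|].
  intro H. apply IH, cong_cancel_letter_l with (s := s), H.
Qed.

End LeftCancellation.

Section Mirror.
Variables (S : Type) (R : word S -> word S -> Prop).

Definition rev_rel (x y : word S) : Prop := R (rev x) (rev y).

Lemma cong_rev_rel x y : cong R x y -> cong rev_rel (rev x) (rev y).
Proof.
  induction 1 as [a b x y Hxy| | |]; try (econstructor; eassumption).
  rewrite !rev_app_distr, <- !app_assoc. apply cong_rel.
  unfold rev_rel. rewrite !rev_involutive. assumption.
Qed.

Lemma rev_rel_cong x y : cong rev_rel x y -> cong R (rev x) (rev y).
Proof.
  induction 1 as [a b x y Hxy| | |]; try (econstructor; eassumption).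
  rewrite !rev_app_distr, <- !app_assoc. apply cong_rel. assumption.
Qed.

Lemma rev_pos (u : word S) : rev (pos u) = pos (rev u).
Proof. apply eq_sym, map_rev. Qed.

Lemma rev_neg (u : word S) : rev (neg u) = neg (rev u).
Proof. unfold neg. rewrite map_rev, !rev_involutive. reflexivity. Qed.

Lemma rev_not_nil (u : word S) : u <> [] -> rev u <> [].
Proof. intros Hu E. apply Hu. rewrite <- (rev_involutive u), E. reflexivity. Qed.

Lemma lrev_step_rev w w' : lrev_step R w w' -> rrev_step rev_rel (rev w) (rev w').
Proof.
  destruct 1 as [w1 w2 u Hu | w1 w2 u v u' v' Hu Hv Huv];
    rewrite !rev_app_distr, !rev_pos, !rev_neg, <- !app_assoc.
  - apply rrev_del, rev_not_nil, Hu.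
  - apply rrev_rel; try apply rev_not_nil; try assumption.
    unfold rel, rev_rel. rewrite <- !rev_app_distr, !rev_involutive. destruct Huv; tauto.
Qed.

Lemma lrev_rev w w' : lrev R w w' -> rrev rev_rel (rev w) (rev w').
Proof.
  induction 1 as [|w1 w2 w3 Hstep _ IH]; econstructor; [apply lrev_step_rev|]; eassumption.
Qed.

Lemma r_complete_rev_rel : l_complete R -> r_complete rev_rel.
Proof.
  intros Hl u v u' v' H. apply rev_rel_cong in H. rewrite !rev_app_distr in H.
  destruct (Hl (rev v) (rev u) (rev v') (rev u') (cong_sym H)) as [v'' [u'' [w [Hrev [Hv Hu]]]]].
  exists (rev u''), (rev v''), (rev w). apply lrev_rev in Hrev.
  rewrite !rev_app_distr, !rev_pos, !rev_neg, !rev_involutive in Hrev.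
  apply cong_rev_rel in Hu, Hv. rewrite rev_involutive, rev_app_distr in Hu, Hv.
  auto.
Qed.

Lemma cong_cancel_r : l_complete R ->
  (forall s u v, R (u ++ [s]) (v ++ [s]) -> u = v) ->
  forall x u v, cong R (u ++ x) (v ++ x) -> cong R u v.
Proof.
  intros Hl Hlast x u v H.
  assert (Hfirst : forall s u v, rev_rel (s :: u) (s :: v) -> u = v).
  { intros s u0 v0 E. apply Hlast, (f_equal (@rev _)) in E. rewrite !rev_involutive in E.
    exact E. }
  apply cong_rev_rel in H. rewrite !rev_app_distr in H.
  apply (cong_cancel_l Hfirst (r_complete_rev_rel Hl)), rev_rel_cong in H.
  rewrite !rev_involutive in H. exact H.
Qed.
End Mirror.

Section CommonMultiples.
Variables (S : Type) (R : word S -> word S -> Prop) (S' : word S -> Prop).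
Local Notation "u ≡ v" := (cong R u v) (at level 70).

Hypothesis common_multiple_S' : forall u v, S' u -> S' v ->
  exists u' v', S' u' /\ S' v' /\ u ++ v' ≡ v ++ u'.

Lemma common_multiple_concat_r V x : Forall S' V -> S' x ->
  exists x' V', S' x' /\ Forall S' V' /\ x ++ concat V' ≡ concat V ++ x'.
Proof.
  revert x. induction V as [|y V IH]; intros x HV Hx.
  - exists x, []. split; [|split]; [assumption | constructor | rewrite app_nil_r; reflexivity].
  - inversion_clear HV as [|? ? Hy HV'].
    destruct (common_multiple_S' Hx Hy) as [x1 [y1 [Hx1 [Hy1 Hxy]]]].
    destruct (IH x1 HV' Hx1) as [x2 [V2 [Hx2 [HV2 HxV]]]].
    exists x2, (y1 :: V2). split; [|split]; [assumption | constructor; assumption |]. simpl.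
    rewrite app_assoc, Hxy, <- app_assoc, HxV, app_assoc. reflexivity.
Qed.

Lemma common_multiple_concat U V : Forall S' U -> Forall S' V ->
  exists U' V', Forall S' U' /\ Forall S' V' /\ concat U ++ concat V' ≡ concat V ++ concat U'.
Proof.
  revert V. induction U as [|x U IH]; intros V HU HV.
  - exists [], V. split; [|split]; [constructor | assumption | rewrite app_nil_r; reflexivity].
  - inversion_clear HU as [|? ? Hx HU'].
    destruct (common_multiple_concat_r HV Hx) as [x1 [V1 [Hx1 [HV1 HxV]]]].
    destruct (IH V1 HU' HV1) as [U2 [V2 [HU2 [HV2 HUV]]]].
    exists (x1 :: U2), V2. split; [|split]; [constructor; assumption | assumption |]. simpl.
    rewrite <- app_assoc, HUV, app_assoc, HxV, <- app_assoc. reflexivity.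
Qed.

End CommonMultiples.

Lemma cond_Er_common_multiples (S : Type) (R : word S -> word S -> Prop) :
  positive_rels R -> cond_Er R -> forall u v : word S, exists u' v', cong R (u ++ v') (v ++ u').
Proof.
  intros Hpos [S' [Hletters HS']] u v.
  assert (Hgen : forall u v, S' u -> S' v ->
    exists u' v', S' u' /\ S' v' /\ cong R (u ++ v') (v ++ u')).
  { intros a b Ha Hb. destruct (HS' a b Ha Hb) as [a' [b' [Ha' [Hb' Hrev]]]].
    exists a', b'. split; [|split]; [assumption..|]. apply rrev_sound; assumption. }
  set (letters := map (fun s : S => [s])).
  assert (Hconcat : forall w, concat (letters w) = w)
    by (induction w; simpl; f_equal; assumption).
  assert (Hletters_S' : forall w, Forall S' (letters w))
    by (intro w; apply Forall_map, Forall_forall; auto).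
  destruct (common_multiple_concat Hgen (Hletters_S' u) (Hletters_S' v)) as [U' [V' [_ [_ H]]]].
  rewrite !Hconcat in H. eauto.
Qed.

Section Quotient.
Variables (A : Type) (E : A -> A -> Prop).
Hypothesis E_equiv : Equivalence E.

Definition quotient : Type := {P : A -> Prop | exists a, P = E a}.

Definition class (a : A) : quotient := exist _ (E a) (ex_intro _ a eq_refl).

Definition repr (q : quotient) : A :=
  proj1_sig (constructive_indefinite_description _ (proj2_sig q)).

Lemma class_eq_iff a b : class a = class b <-> E a b.
Proof.
  split.
  - intro H. apply (f_equal (@proj1_sig _ _)) in H. simpl in H. rewrite H. reflexivity.
  - intro H. apply subset_eq_compat, functional_extensionality. intro c.
    apply propositional_extensionality. rewrite H. reflexivity.
Qed.

Lemma class_repr q : class (repr q) = q.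
Proof.
  unfold repr. destruct (constructive_indefinite_description _ _) as [a Ha]. simpl.
  destruct q as [P HP]. simpl in Ha. subst P. apply subset_eq_compat. reflexivity.
Qed.

Lemma repr_class a : E (repr (class a)) a.
Proof. apply class_eq_iff, class_repr. Qed.

Lemma class_surj q : exists a, q = class a.
Proof. exists (repr q). symmetry. apply class_repr. Qed.

End Quotient.

Section PresentedGroup.
Variables (S : Type) (R : word S -> word S -> Prop).

(* Over the alphabet S + S, [cong group_rel] is equality in the group presented by (S, R). *)
Inductive group_rel : word (S + S) -> word (S + S) -> Prop :=
| group_rel_pos_neg s : group_rel [inl s; inr s] []
| group_rel_neg_pos s : group_rel [inr s; inl s] []
| group_rel_R x y : R x y -> group_rel (pos x) (pos y).

Local Notation "w ≈ w'" := (cong group_rel w w') (at level 70).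

Definition letter_inv (l : S + S) : S + S :=
  match l with inl s => inr s | inr s => inl s end.

Definition sword_inv (w : sword S) : sword S := rev (map letter_inv w).

Lemma sword_inv_pos (u : word S) : sword_inv (pos u) = neg u.
Proof. unfold sword_inv, pos, neg. rewrite map_map. reflexivity. Qed.

Lemma letter_inv_r l : [l; letter_inv l] ≈ [].
Proof. destruct l; apply cong_of_R; constructor. Qed.

Lemma letter_inv_l l : [letter_inv l; l] ≈ [].
Proof. destruct l; apply cong_of_R; constructor. Qed.

Lemma app_sword_inv w : w ++ sword_inv w ≈ [].
Proof.
  induction w as [|l w IH]; [reflexivity|]. unfold sword_inv in *. simpl.
  rewrite app_assoc, app_comm_cons, IH. apply letter_inv_r.
Qed.

Lemma sword_inv_app w : sword_inv w ++ w ≈ [].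
Proof.
  induction w as [|l w IH]; [reflexivity|]. unfold sword_inv in *. simpl.
  rewrite <- app_assoc. change ([letter_inv l] ++ l :: w) with ([letter_inv l; l] ++ w).
  rewrite letter_inv_l. exact IH.
Qed.

Lemma sword_inv_cong w w' : w ≈ w' -> sword_inv w ≈ sword_inv w'.
Proof.
  intro H. transitivity (sword_inv w ++ w ++ sword_inv w').
  - rewrite H at 3. rewrite app_sword_inv, app_nil_r. reflexivity.
  - rewrite app_assoc, sword_inv_app. reflexivity.
Qed.

Lemma pos_cong u v : cong R u v -> pos u ≈ pos v.
Proof.
  induction 1 as [a b x y Hxy| | |]; try (econstructor; eassumption).
  unfold pos. rewrite !map_app. apply cong_rel. constructor. assumption.
Qed.

Local Notation cls := (class (cong group_rel)).
Local Notation quot := (quotient (cong group_rel)).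

Definition quot_mul (q q' : quot) : quot := cls (repr q ++ repr q').
Definition quot_inv (q : quot) : quot := cls (sword_inv (repr q)).

Lemma quot_mul_class w w' : quot_mul (cls w) (cls w') = cls (w ++ w').
Proof. apply class_eq_iff; [exact _|]. rewrite !repr_class by exact _. reflexivity. Qed.

Lemma quot_inv_class w : quot_inv (cls w) = cls (sword_inv w).
Proof. apply class_eq_iff; [exact _|]. apply sword_inv_cong, repr_class. exact _. Qed.

Definition presented_group : group.
Proof.
  refine (@Group quot quot_mul (cls []) quot_inv _ _ _ _ _); intros;
    repeat match goal with q : quot |- _ => destruct (class_surj q) as [? ->] end;
    rewrite ?quot_inv_class, ?quot_mul_class; apply class_eq_iff; try exact _.
  - rewrite app_assoc. reflexivity.
  - reflexivity.
  - rewrite app_nil_r. reflexivity.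
  - apply sword_inv_app.
  - apply app_sword_inv.
Defined.

End PresentedGroup.

Add Parametric Morphism (S : Type) (R : word S -> word S -> Prop) : (@pos S)
  with signature cong R ==> cong (group_rel R) as pos_morphism.
Proof. apply pos_cong. Qed.

Lemma pos_app S (u v : word S) : pos (u ++ v) = pos u ++ pos v.
Proof. apply map_app. Qed.

Lemma neg_app S (u v : word S) : neg (u ++ v) = neg v ++ neg u.
Proof. unfold neg. rewrite map_app, rev_app_distr. reflexivity. Qed.

Section OreEmbedding.
Variables (S : Type) (R : word S -> word S -> Prop).
Local Notation "u ≡ v" := (cong R u v) (at level 70).
Local Notation "w ≈ w'" := (cong (group_rel R) w w') (at level 70).
Local Notation frac := (word S * word S)%type.

Hypothesis common_multiple : forall u v : word S, exists u' v', u ++ v' ≡ v ++ u'.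
Hypothesis cancel_l : forall x u v : word S, x ++ u ≡ x ++ v -> u ≡ v.
Hypothesis cancel_r : forall x u v : word S, u ++ x ≡ v ++ x -> u ≡ v.

Definition frac_eq (p p' : frac) : Prop :=
  exists c d, fst p ++ c ≡ fst p' ++ d /\ snd p ++ c ≡ snd p' ++ d.

Lemma frac_eq_refl p : frac_eq p p.
Proof. exists [], []. split; reflexivity. Qed.

Lemma frac_eq_sym p p' : frac_eq p p' -> frac_eq p' p.
Proof. intros [c [d [Hx Hy]]]. exists d, c. split; symmetry; assumption. Qed.

Lemma frac_eq_trans p p' p'' : frac_eq p p' -> frac_eq p' p'' -> frac_eq p p''.
Proof.
  destruct p as [x y], p' as [x' y'], p'' as [x'' y''].
  intros [c [d [Hx Hy]]] [e [f [Hx' Hy']]]. simpl in *.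
  destruct (common_multiple d e) as [g [h Hdh]].
  exists (c ++ h), (f ++ g). split.
  - rewrite app_assoc, Hx, <- app_assoc, Hdh, app_assoc, Hx', <- app_assoc. reflexivity.
  - rewrite app_assoc, Hy, <- app_assoc, Hdh, app_assoc, Hy', <- app_assoc. reflexivity.
Qed.

Lemma frac_eq_inv_letter s x y x1 s1 X Y X1 S1 :
  s :: x1 ≡ x ++ s1 -> s :: X1 ≡ X ++ S1 ->
  frac_eq (x, y) (X, Y) -> frac_eq (x1, y ++ s1) (X1, Y ++ S1).
Proof.
  intros Hx1 HX1 [c [d [Hx Hy]]]. simpl in *.
  destruct (common_multiple s1 c) as [b [a Hab]].
  destruct (common_multiple S1 (d ++ b)) as [f [e Hef]].
  exists (a ++ f), e. split; simpl.
  - apply (cancel_l [s]). simpl.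
    rewrite app_comm_cons, Hx1, <- app_assoc, (app_assoc s1), Hab, <- app_assoc, app_assoc, Hx.
    rewrite <- app_assoc, (app_assoc d), <- Hef, app_assoc, <- HX1. reflexivity.
  - rewrite <- app_assoc, (app_assoc s1), Hab, <- app_assoc, app_assoc, Hy.
    rewrite <- app_assoc, (app_assoc d), <- Hef, app_assoc. reflexivity.
Qed.

Lemma common_multiple_pair u v : exists p : frac, u ++ snd p ≡ v ++ fst p.
Proof. destruct (common_multiple u v) as [u' [v' H]]. exists (u', v'). exact H. Qed.

Definition ore_compl (u v : word S) : frac :=
  proj1_sig (constructive_indefinite_description _ (common_multiple_pair u v)).

Lemma ore_compl_spec u v : u ++ snd (ore_compl u v) ≡ v ++ fst (ore_compl u v).
Proof. exact (proj2_sig (constructive_indefinite_description _ (common_multiple_pair u v))). Qed.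

(* With (u', x') := ore_compl [s] x we have s x' ≡ x u', hence s⁻¹ x y⁻¹ = x' (y u')⁻¹. *)
Definition frac_act_letter (l : S + S) (p : frac) : frac :=
  match l with
  | inl s => (s :: fst p, snd p)
  | inr s => (snd (ore_compl [s] (fst p)), snd p ++ fst (ore_compl [s] (fst p)))
  end.

Definition frac_act (w : sword S) (p : frac) : frac := fold_right frac_act_letter p w.

Lemma frac_act_app a b p : frac_act (a ++ b) p = frac_act a (frac_act b p).
Proof. apply fold_right_app. Qed.

Lemma frac_act_pos a p : frac_act (pos a) p = (a ++ fst p, snd p).
Proof.
  induction a as [|s a IH]; [destruct p; reflexivity|].
  unfold frac_act in *. simpl. rewrite IH. reflexivity.
Qed.

Lemma frac_act_letter_compat l p q :
  frac_eq p q -> frac_eq (frac_act_letter l p) (frac_act_letter l q).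
Proof.
  destruct l as [s|s], p as [x y], q as [X Y]; simpl.
  - intros [c [d [Hx Hy]]]. exists c, d. simpl. rewrite Hx, Hy. split; reflexivity.
  - apply frac_eq_inv_letter with (s := s);
      [apply (ore_compl_spec [s] x) | apply (ore_compl_spec [s] X)].
Qed.

Lemma frac_act_compat w p q : frac_eq p q -> frac_eq (frac_act w p) (frac_act w q).
Proof.
  induction w as [|l w IH]; [trivial|]. intro H. apply frac_act_letter_compat, IH, H.
Qed.

Lemma group_rel_frac_eq w w' p : group_rel R w w' -> frac_eq (frac_act w p) (frac_act w' p).
Proof.
  destruct 1 as [s|s|x y Hxy]; destruct p as [p q].
  - pose proof (ore_compl_spec [s] p) as H.
    exists [], (fst (ore_compl [s] p)). simpl. rewrite !app_nil_r. split; [exact H | reflexivity].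
  - pose proof (ore_compl_spec [s] (s :: p)) as H. apply (cancel_l [s]) in H.
    exists [], (fst (ore_compl [s] (s :: p))). simpl. rewrite !app_nil_r.
    split; [exact H | reflexivity].
  - rewrite !frac_act_pos. exists [], []. simpl. rewrite !app_nil_r.
    split; [apply cong_app_r, cong_of_R, Hxy | reflexivity].
Qed.

Lemma gcong_frac_eq w w' p : w ≈ w' -> frac_eq (frac_act w p) (frac_act w' p).
Proof.
  intro H. revert p. induction H as [a b x y Hxy| | |]; intro p.
  - rewrite !frac_act_app. apply frac_act_compat, group_rel_frac_eq, Hxy.
  - apply frac_eq_refl.
  - apply frac_eq_sym; auto.
  - eapply frac_eq_trans; eauto.
Qed.

Lemma gcong_pos_cong u v : pos u ≈ pos v -> u ≡ v.
Proof.
  intro H. apply gcong_frac_eq with (p := ([], [])) in H.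
  rewrite !frac_act_pos in H. destruct H as [c [d [Huv Hcd]]]. simpl in *.
  rewrite !app_nil_r, <- Hcd in Huv. apply (cancel_r c), Huv.
Qed.

Lemma gcong_frac_form w : exists x y, w ≈ pos x ++ neg y.
Proof.
  induction w as [|[s|s] w [x [y IH]]].
  - exists [], []. reflexivity.
  - exists (s :: x), y. rewrite IH. reflexivity.
  - destruct (common_multiple [s] x) as [u' [v' Hs]].
    exists v', (y ++ u'). rewrite IH, neg_app.
    transitivity (inr s :: pos (x ++ u') ++ neg u' ++ neg y).
    { rewrite pos_app, <- app_assoc, (app_assoc (pos u')), <- (sword_inv_pos u'), app_sword_inv.
      reflexivity. }
    rewrite <- Hs. exact (cong_app_r _ (letter_inv_l R (inl s))).
Qed.

Theorem ore_embedding : embeds_in_group_of_fractions R.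
Proof.
  exists (presented_group R), (fun u => class (cong (group_rel R)) (pos u)).
  split; [|split; [|split]]; simpl.
  - reflexivity.
  - intros u v. rewrite quot_mul_class, pos_app. reflexivity.
  - intros u v. rewrite class_eq_iff by exact _. split; [apply gcong_pos_cong | apply pos_cong].
  - intro g. destruct (class_surj g) as [w ->]. destruct (gcong_frac_form w) as [x [y Hw]].
    exists x, y. rewrite quot_inv_class, quot_mul_class, sword_inv_pos.
    apply class_eq_iff; [exact _ | exact Hw].
Qed.

End OreEmbedding.

Theorem proposition7p1 (S : Type) (R : word S -> word S -> Prop) :
  inhabited S ->
  positive_rels R ->
  complete R ->
  cond_C R ->
  cond_Er R ->
  embeds_in_group_of_fractions R.
Proof.
  intros _ Hpos [Hr Hl] HC HEr.
  apply ore_embedding.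
  - exact (cond_Er_common_multiples Hpos HEr).
  - apply cong_cancel_l; [|exact Hr].
    intros s u v H. exact (proj1 (HC _ _ H) s u v eq_refl eq_refl).
  - apply cong_cancel_r; [exact Hl|].
    intros s u v H. exact (proj2 (HC _ _ H) s u v eq_refl eq_refl).
Qed.
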